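(* Under the hypotheses of the FTRL regret setting in the context (non-negative losses $\ell_k\in\mathbb R^A$; $0<\alpha_1\le1$, $\eta_1=\eta_2(1-\alpha_1)$; for $k\ge2$, $0<\alpha_k<1$ and $0<\eta_{k+1}(1-\alpha_k)\le\eta_k$), define for $k\ge1$ the auxiliary distribution $\pi_{k+1}^-(a)=\exp(-\widehat\eta_kL_k(a))/\sum_{a'}\exp(-\widehat\eta_kL_k(a'))$. Then for every $n\ge1$, $$R_n\le\sum_{k=1}^n\alpha_k^n\langle\pi_k-\pi_{k+1}^-,\ell_k\rangle+\frac{\log A}{\eta_{n+1}}.$$
   Context: Online weighted linear optimization over $\mathcal A=\{1,\dots,A\}$: given $\{\alpha_k\}\subset(0,1]$, let $\alpha_i^k=\alpha_i\prod_{j=i+1}^k(1-\alpha_j)$ for $i<k$, $\alpha_k^k=\alpha_k$. Define $L_0=0$ and $L_k=(1-\alpha_k)L_{k-1}+\alpha_k\ell_k=\sum_{i=1}^k\alpha_i^k\ell_i$. FTRL iterates: $\pi_k(a)=\exp(-\eta_kL_{k-1}(a))/\sum_{a'}\exp(-\eta_kL_{k-1}(a'))$, $k\ge1$. $\widehat\eta_1=\eta_2$ and $\widehat\eta_k=\eta_k/(1-\alpha_k)$ for $k>1$. Regret: $R_n=\max_{a}\{\sum_{k=1}^n\alpha_k^n\langle\pi_k,\ell_k\rangle-\sum_{k=1}^n\alpha_k^n\ell_k(a)\}$. *)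

From mathcomp Require Import all_boot all_order all_algebra.
From mathcomp Require Import all_classical all_reals.
From mathcomp.analysis Require Import sequences exp.
Set Implicit Arguments. Unset Strict Implicit. Unset Printing Implicit Defensive.
Import Order.TTheory GRing.Theory Num.Theory.
Local Open Scope ring_scope.

(* Actions are 'I_A (= {1,...,A} shifted to {0,...,A-1}).
   Rounds are indexed by nat starting at 1: alpha k, eta k, ell k for k >= 1. *)

Definition wgt (R : realType) (alpha : nat -> R) (i k : nat) : R :=
  alpha i * \prod_(i.+1 <= j < k.+1) (1 - alpha j).

Fixpoint cumloss (R : realType) (A : nat) (alpha : nat -> R)
    (ell : nat -> 'I_A -> R) (k : nat) (a : 'I_A) : R :=
  match k with
  | 0 => 0
  | k'.+1 => (1 - alpha k) * cumloss alpha ell k' a + alpha k * ell k a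
  end.

Definition dot (R : realType) (A : nat) (p l : 'I_A -> R) : R :=
  \sum_(a < A) p a * l a.

Definition softmax (R : realType) (A : nat) (e : R) (L : 'I_A -> R) (a : 'I_A) : R :=
  expR (- (e * L a)) / \sum_(b < A) expR (- (e * L b)).

Definition ftrl_pi (R : realType) (A : nat) (alpha eta : nat -> R)
    (ell : nat -> 'I_A -> R) (k : nat) : 'I_A -> R :=
  softmax (eta k) (cumloss alpha ell k.-1).

Definition etahat (R : realType) (alpha eta : nat -> R) (k : nat) : R :=
  if k == 1%N then eta 2%N else eta k / (1 - alpha k).

Definition pi_minus_next (R : realType) (A : nat) (alpha eta : nat -> R)
    (ell : nat -> 'I_A -> R) (k : nat) : 'I_A -> R :=
  softmax (etahat alpha eta k) (cumloss alpha ell k).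

Definition maxs (R : realType) (s : seq R) : R :=
  \big[Num.max/head 0 s]_(x <- s) x.

Definition regret (R : realType) (A : nat) (alpha eta : nat -> R)
    (ell : nat -> 'I_A -> R) (n : nat) : R :=
  maxs [seq (\sum_(1 <= k < n.+1) wgt alpha k n * dot (ftrl_pi alpha eta ell k) (ell k))
            - (\sum_(1 <= k < n.+1) wgt alpha k n * ell k a) | a <- enum 'I_A].

From mathcomp Require Import all_boot all_order all_algebra.
From mathcomp Require Import all_classical all_reals.
From mathcomp.analysis Require Import sequences exp.
From mathcomp Require Import ring lra.
Import Order.TTheory GRing.Theory Num.Theory.
Local Open Scope ring_scope.
Set Implicit Arguments. Unset Strict Implicit.

(* A "be the leader" argument with the entropic regulariser.  The potential
   [Phi(e, L) = (ln A - ln sum_a exp(-e L(a))) / e] is, by the Gibbs variational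
   principle, the minimum over distributions p of [<p, L> + (H(p) + ln A) / e]
   (H the negative entropy), attained at softmax(e, L).  Evaluating the minimum
   defining Phi(hat eta_k, L_k) at pi^-_{k+2} and using L_{k+1} = (1 - alpha) L_k
   + alpha ell and (1 - alpha) hat eta_{k+1} = eta_{k+1} <= hat eta_k gives
   (1 - alpha) Phi_k + alpha <pi^-_{k+2}, ell_{k+1}> <= Phi_{k+1}, so the weighted
   sum of the <pi^-_{k+1}, ell_k> is at most Phi_n <= L_n(a) + ln A / eta_{n+1}. *)

Lemma ln_le_sub1 (R : realType) (x : R) : 0 < x -> ln x <= x - 1.
Proof.
move=> x_gt0; have := @le_ln1Dx R (x - 1).
rewrite addrCA subrr addr0; apply; lra.
Qed.

Section Gibbs.
Variables (R : realType) (A : nat).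
Implicit Types (p q L l : 'I_A -> R) (e : R).

Definition negent p : R := \sum_(a < A) p a * ln (p a).

Definition partition e L : R := \sum_(b < A) expR (- (e * L b)).

Definition potential e L : R := (ln A%:R - ln (partition e L)) / e.

Lemma cross_negent_le p q :
  (forall a, 0 < p a) -> (forall a, 0 < q a) ->
  \sum_(a < A) p a = 1 -> \sum_(a < A) q a = 1 ->
  \sum_(a < A) p a * ln (q a) <= negent p.
Proof.
move=> p_gt0 q_gt0 p_sum q_sum.
rewrite -subr_ge0 /negent -sumrB.
apply: (@le_trans _ _ (\sum_(a < A) (p a - q a))); first by rewrite sumrB p_sum q_sum subrr.
apply: ler_sum => a _; have pa_gt0 := p_gt0 a.
have := ln_le_sub1 (divr_gt0 (q_gt0 a) pa_gt0); rewrite ln_div ?posrE // => ln_le.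
have := ler_wpM2l (ltW pa_gt0) ln_le.
rewrite !mulrBr mulr1 mulrCA divff ?mulr1 ?gt_eqF //; lra.
Qed.

Lemma dot_comb p L l (c d : R) :
  dot p (fun b => c * L b + d * l b) = c * dot p L + d * dot p l.
Proof. by rewrite /dot !mulr_sumr -big_split; apply: eq_bigr => a _ /=; ring. Qed.

Lemma dotBl p q l : dot (fun a => p a - q a) l = dot p l - dot q l.
Proof. by rewrite /dot -sumrB; apply: eq_bigr => a _; rewrite mulrBl. Qed.

Hypothesis A_gt0 : (0 < A)%N.

Lemma partition_gt0 e L : 0 < partition e L.
Proof.
rewrite /partition (bigD1 (Ordinal A_gt0)) //= ltr_pwDl ?expR_gt0 //.
by apply: sumr_ge0 => b _; rewrite ltW ?expR_gt0.
Qed.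

Lemma softmax_gt0 e L a : 0 < softmax e L a.
Proof. by rewrite divr_gt0 ?expR_gt0 ?partition_gt0. Qed.

Lemma sum_softmax e L : \sum_(a < A) softmax e L a = 1.
Proof. by rewrite -mulr_suml divff ?gt_eqF ?partition_gt0. Qed.

Lemma cross_softmax p e L : \sum_(a < A) p a = 1 ->
  \sum_(a < A) p a * ln (softmax e L a) = - (e * dot p L) - ln (partition e L).
Proof.
move=> p_sum; under eq_bigr => a _.
  rewrite ln_div ?posrE ?expR_gt0 ?partition_gt0 // expRK mulrBr.
  over.
rewrite sumrB -mulr_suml p_sum mul1r /dot mulr_sumr -sumrN.
by congr (_ - _); apply: eq_bigr => a _; ring.
Qed.

Lemma potential_eq p e L : 0 < e -> \sum_(a < A) p a = 1 ->
  dot p L + (negent p + ln A%:R) / e =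
  potential e L + (negent p - \sum_(a < A) p a * ln (softmax e L a)) / e.
Proof. by move=> e_gt0 p_sum; rewrite cross_softmax // /potential; field; rewrite gt_eqF. Qed.

Lemma potential_le p e L : 0 < e -> (forall a, 0 < p a) -> \sum_(a < A) p a = 1 ->
  potential e L <= dot p L + (negent p + ln A%:R) / e.
Proof.
move=> e_gt0 p_gt0 p_sum; rewrite potential_eq // lerDl.
apply: divr_ge0; last exact: ltW.
by rewrite subr_ge0; apply: cross_negent_le => // [a|]; rewrite ?softmax_gt0 ?sum_softmax.
Qed.

Lemma potential_softmax e L : 0 < e ->
  potential e L = dot (softmax e L) L + (negent (softmax e L) + ln A%:R) / e.
Proof. by move=> e_gt0; rewrite potential_eq ?sum_softmax // subrr mul0r addr0. Qed.

Lemma negent_lnA_ge0 p : (forall a, 0 < p a) -> \sum_(a < A) p a = 1 ->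
  0 <= negent p + ln A%:R.
Proof.
move=> p_gt0 p_sum; have A_pos : 0 < A%:R :> R by rewrite ltr0n.
have unif_gt0 : 0 < A%:R^-1 :> R by rewrite invr_gt0.
have := @cross_negent_le p (fun=> A%:R^-1) p_gt0 (fun=> unif_gt0) p_sum.
rewrite -mulr_suml p_sum mul1r lnV ?posrE // sumr_const card_ord.
by rewrite -[_ *+ A]mulr_natr mulVf ?gt_eqF // -subr_ge0 opprK; apply.
Qed.

Lemma dot_softmax_le_potential e L : 0 < e -> dot (softmax e L) L <= potential e L.
Proof.
move=> e_gt0; rewrite potential_softmax // lerDl; apply: divr_ge0; last exact: ltW.
by apply: negent_lnA_ge0 => [a|]; rewrite ?softmax_gt0 ?sum_softmax.
Qed.

Lemma potential_le_loss e L a : 0 < e -> potential e L <= L a + ln A%:R / e.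
Proof.
move=> e_gt0; rewrite /potential mulrBl addrC lerD2r -mulNr ler_pdivrMr // mulrC lerNl.
rewrite -[X in X <= _]expRK ler_ln ?posrE ?expR_gt0 ?partition_gt0 //.
rewrite /partition (bigD1 a) //= lerDl.
by apply: sumr_ge0 => b _; rewrite ltW ?expR_gt0.
Qed.

Lemma potential_mix e e' (a : R) L l : 0 < e -> 0 < e' -> a <= 1 ->
  (1 - a) * e' <= e ->
  (1 - a) * potential e L + a * dot (softmax e' (fun b => (1 - a) * L b + a * l b)) l
    <= potential e' (fun b => (1 - a) * L b + a * l b).
Proof.
set M := fun b => _; set p := softmax e' M => e_gt0 e'_gt0 a_le1 e'_le.
have X_ge0 : 0 <= negent p + ln A%:R.
  by apply: negent_lnA_ge0 => [b|]; rewrite ?softmax_gt0 ?sum_softmax.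
have rate_le : (1 - a) * ((negent p + ln A%:R) / e) <= (negent p + ln A%:R) / e'.
  rewrite mulrA ler_pdivrMr //.
  have -> : (1 - a) * (negent p + ln A%:R) = (negent p + ln A%:R) / e' * ((1 - a) * e').
    by field; rewrite gt_eqF.
  by rewrite ler_wpM2l // divr_ge0 // ltW.
rewrite [potential e' _]potential_softmax // -/p /M dot_comb addrAC lerD2r.
apply: le_trans (lerD (lexx _) rate_le); rewrite -mulrDr; apply: ler_wpM2l; first lra.
exact: potential_le (fun b => softmax_gt0 _ _ b) (sum_softmax _ _).
Qed.

End Gibbs.

Lemma wgt_diag (R : realType) (alpha : nat -> R) n : wgt alpha n n = alpha n.
Proof. by rewrite /wgt big_geq // mulr1. Qed.

Lemma wsumS (R : realType) (alpha : nat -> R) (f : nat -> R) n :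
  \sum_(1 <= k < n.+2) wgt alpha k n.+1 * f k =
  (1 - alpha n.+1) * \sum_(1 <= k < n.+1) wgt alpha k n * f k + alpha n.+1 * f n.+1.
Proof.
rewrite big_nat_recr //= wgt_diag mulr_sumr; congr (_ + _).
apply: eq_big_nat => k /andP [_ le_kn].
by rewrite /wgt big_nat_recr //=; ring.
Qed.

Lemma cumloss_wsum (R : realType) (A : nat) (alpha : nat -> R)
    (ell : nat -> 'I_A -> R) n a :
  cumloss alpha ell n a = \sum_(1 <= k < n.+1) wgt alpha k n * ell k a.
Proof. by elim: n => [|n IHn]; [rewrite big_geq | rewrite wsumS -IHn]. Qed.

Lemma maxs_le (R : realType) (s : seq R) (B : R) :
  s != [::] -> (forall x, x \in s -> x <= B) -> maxs s <= B.
Proof.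
case: s => [//|x s] _ s_le; rewrite /maxs big_seq.
apply: (big_ind (fun z => z <= B)) => [|u v|y]; first by rewrite s_le ?mem_head.
  by rewrite ge_max => -> ->.
exact: s_le.
Qed.

Lemma regret_le_wsum_dotB (R : realType) (A : nat) (alpha eta : nat -> R)
    (ell q : nat -> 'I_A -> R) (n : nat) (B : R) : (0 < A)%N ->
  (forall a, \sum_(1 <= k < n.+1) wgt alpha k n * dot (q k) (ell k)
               <= \sum_(1 <= k < n.+1) wgt alpha k n * ell k a + B) ->
  regret alpha eta ell n <=
    \sum_(1 <= k < n.+1) wgt alpha k n *
      dot (fun a => ftrl_pi alpha eta ell k a - q k a) (ell k) + B.
Proof.
move=> A_gt0 q_le; apply: maxs_le => [|_ /mapP [a _ ->]].
  by rewrite -size_eq0 size_map size_enum_ord -lt0n.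
under [X in _ <= X + _]eq_bigr => k _ do rewrite dotBl mulrBr.
by rewrite sumrB; have := q_le a; lra.
Qed.

Section BeTheLeader.
Variables (R : realType) (A : nat) (alpha eta : nat -> R) (ell : nat -> 'I_A -> R).
Hypothesis A_gt0 : (0 < A)%N.
Hypothesis alpha_le1 : forall k, (2 <= k)%N -> alpha k <= 1.
Hypothesis eta_etahat : forall k, (1 <= k)%N -> 0 < eta k.+1 <= etahat alpha eta k.

Local Notation L := (cumloss alpha ell).
Local Notation P := (pi_minus_next alpha eta ell).
Local Notation eh := (etahat alpha eta).

Lemma etahat_gt0 k : (1 <= k)%N -> 0 < eh k.
Proof. by move=> /eta_etahat /andP [/lt_le_trans]; apply. Qed.

Lemma wsum_pi_minus_le_potential m : (1 <= m)%N ->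
  \sum_(1 <= k < m.+1) wgt alpha k m * dot (P k) (ell k) <= potential (eh m) (L m).
Proof.
elim: m => [//|[_ _|m IHm _]].
  have dot_L1 : dot (P 1) (L 1) = alpha 1 * dot (P 1) (ell 1).
    by rewrite dot_comb {1}/dot big1 ?mulr0 ?add0r // => a _; rewrite mulr0.
  by rewrite big_nat1 wgt_diag -dot_L1 dot_softmax_le_potential ?etahat_gt0.
have eh_succ : eh m.+2 = eta m.+2 / (1 - alpha m.+2) by [].
have eh1_gt0 := etahat_gt0 (isT : (1 <= m.+1)%N).
have eh2_gt0 := etahat_gt0 (isT : (1 <= m.+2)%N).
have alpha2_le1 := alpha_le1 (isT : (2 <= m.+2)%N).
have rate_le : (1 - alpha m.+2) * eh m.+2 <= eh m.+1.
  have /andP [_ eta_le] := eta_etahat (isT : (1 <= m.+1)%N).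
  rewrite eh_succ mulrC divfK // subr_eq0.
  apply: contraTneq eh2_gt0 => alpha_eq1.
  by rewrite eh_succ -alpha_eq1 subrr invr0 mulr0 ltxx.
apply: le_trans (potential_mix A_gt0 _ _ eh1_gt0 eh2_gt0 alpha2_le1 rate_le).
by rewrite wsumS lerD2r ler_wpM2l ?IHm // subr_ge0.
Qed.

End BeTheLeader.

Lemma eta_succ_le_etahat (R : realType) (alpha eta : nat -> R) :
  (forall k, (2 <= k)%N -> 0 < alpha k < 1) ->
  (forall k, (2 <= k)%N -> 0 < eta k.+1 * (1 - alpha k) <= eta k) ->
  forall k, (1 <= k)%N -> 0 < eta k.+1 <= etahat alpha eta k.
Proof.
move=> alpha_in eta_dec [//|[_|k _]].
  by have /andP [pos le] := eta_dec 2%N isT; rewrite /etahat /= lexx (lt_le_trans pos le).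
have /andP [_ alpha_lt1] := alpha_in k.+2 isT.
have one_sub_gt0 : 0 < 1 - alpha k.+2 by rewrite subr_gt0.
have /andP [pos le] := eta_dec k.+2 isT.
by rewrite /etahat /= ler_pdivlMr // le -(pmulr_lgt0 _ one_sub_gt0) pos.
Qed.

Theorem mainTheorem3 (R : realType) (A : nat) (alpha eta : nat -> R)
    (ell : nat -> 'I_A -> R) :
  (0 < A)%N ->
  (forall k a, (1 <= k)%N -> 0 <= ell k a) ->
  0 < alpha 1%N <= 1 ->
  eta 1%N = eta 2%N * (1 - alpha 1%N) ->
  (forall k, (2 <= k)%N -> 0 < alpha k < 1) ->
  (forall k, (2 <= k)%N -> 0 < eta k.+1 * (1 - alpha k) <= eta k) ->
  forall n : nat, (1 <= n)%N ->
    regret alpha eta ell n <=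
      \sum_(1 <= k < n.+1) wgt alpha k n *
          dot (fun a => ftrl_pi alpha eta ell k a - pi_minus_next alpha eta ell k a) (ell k)
      + ln (A%:R) / eta n.+1.
Proof.
(* Neither the sign of the losses nor alpha_1 <= 1 nor the value of eta_1 is needed. *)
move=> A_gt0 _ _ _ alpha_in eta_dec n n_ge1.
have eta_eh := eta_succ_le_etahat alpha_in eta_dec.
have alpha_le1 k : (2 <= k)%N -> alpha k <= 1.
  by move=> /alpha_in /andP [_ /ltW].
have /andP [eta_gt0 eta_le] := eta_eh n n_ge1.
apply: regret_le_wsum_dotB => // a; rewrite -cumloss_wsum.
apply: le_trans (wsum_pi_minus_le_potential ell A_gt0 alpha_le1 eta_eh n_ge1) _.
apply: le_trans (potential_le_loss A_gt0 _ a (etahat_gt0 eta_eh n_ge1)) _.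
rewrite lerD2l ler_pdivrMr ?(lt_le_trans eta_gt0) // mulrAC ler_pdivlMr //.
by rewrite ler_wpM2l ?ln_ge0 ?ler1n.
Qed.
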